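(* Consider a shared-cache coded caching system with $N$ files $X^1,\dots,X^N$, $K$ users and $\Lambda\le K$ caches, with $N\ge K$, and let $t=\Lambda\gamma\in\{1,\dots,\Lambda\}$ be an integer. The users are partitioned into sets $\mathcal{U}_1,\dots,\mathcal{U}_\Lambda$, where $\mathcal{U}_\lambda$ is the set of users associated with cache $\lambda$, and the caches are labelled so that $\mathcal{L}_1\ge\mathcal{L}_2\ge\dots\ge\mathcal{L}_\Lambda$, where $\mathcal{L}_\lambda=|\mathcal{U}_\lambda|$. Let the placement be the SC placement $\mathcal{M}_{\text{SC}}$ described in the context, and let $\mathbf{d}_{\text{worst}}=(d_1,\dots,d_K)$ be a demand vector in which the users request pairwise distinct files. Then the generalized independence number and the min-rank over $\mathbb{F}_q$ of the induced index coding problem $\mathcal{I}(\mathcal{M}_{\text{SC}},\mathbf{d}_{\text{worst}})$ satisfy $$\alpha(\mathcal{M}_{\text{SC}},\mathbf{d}_{\text{worst}})=\kappa(\mathcal{M}_{\text{SC}},\mathbf{d}_{\text{worst}})=\sum_{i=1}^{\Lambda-\Lambda\gamma}\mathcal{L}_i\binom{\Lambda-i}{\Lambda\gamma}.$$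
   Context: Binomial convention: $\binom{n}{k}=\frac{n!}{(n-k)!k!}$ and $\binom{n}{k}=0$ if $n<k$. Here $\gamma=M/N$, where $M$ is the normalized cache memory, and $t=\Lambda\gamma$ is assumed to be an integer. SC placement $\mathcal{M}_{\text{SC}}$: each file $X^n$ is split into $\binom{\Lambda}{t}$ disjoint subfiles $X^n_{\mathcal{T}}$, one for each $\mathcal{T}\subseteq[\Lambda]$ with $|\mathcal{T}|=t$, and each subfile is regarded as a single symbol of the finite field $\mathbb{F}_q$. Cache $\lambda$ stores all subfiles $X^n_{\mathcal{T}}$ with $\lambda\in\mathcal{T}$, $n\in[N]$. Every user associated with cache $\lambda$ has access to exactly that cache's content. Index coding problem $\mathcal{I}(\mathcal{M}_{\text{SC}},\mathbf{d})$: its messages are the $N\binom{\Lambda}{t}$ subfiles $X^n_{\mathcal{T}}$. For each user $u$, associated with cache $\lambda$ and demanding file $d_u$, and for each $\mathcal{T}$ with $\lambda\notin\mathcal{T}$, there is one receiver that demands $X^{d_u}_{\mathcal{T}}$ and whose side-information set is the set of messages stored in cache $\lambda$. For an index coding problem with messages indexed by $[n]$ and receivers $i\in[K']$, where receiver $i$ demands message $f(i)$ and has side-information index set $\mathcal{X}_i$ with $f(i)\notin\mathcal{X}_i$, define the following. - Min-rank over $\mathbb{F}_q$: $\kappa=\min\{\mathrm{rank}_q(\{\mathbf{v}_i+\mathbf{e}_{f(i)}\}_{i\in[K']}) : \mathbf{v}_i\in\mathbb{F}_q^n,\ \mathrm{supp}(\mathbf{v}_i)\subseteq\mathcal{X}_i\}$,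 where $\mathbf{e}_j$ is the $j$-th standard unit vector. This equals the minimum length of a scalar linear index code over $\mathbb{F}_q$. - Generalized independence number: let $\mathcal{Y}_i=[n]\setminus(\{f(i)\}\cup\mathcal{X}_i)$ and $\mathcal{J}=\bigcup_{i}\{\{f(i)\}\cup Y_i : Y_i\subseteq\mathcal{Y}_i\}$. A set $H\subseteq[n]$ is a generalized independent set if every nonempty subset of $H$ belongs to $\mathcal{J}$. Then $\alpha$ is the maximum size of a generalized independent set. $\alpha(\mathcal{M}_{\text{SC}},\mathbf{d})$ and $\kappa(\mathcal{M}_{\text{SC}},\mathbf{d})$ denote these quantities for $\mathcal{I}(\mathcal{M}_{\text{SC}},\mathbf{d})$. *)

From HB Require Import structures.
From mathcomp Require Import all_boot all_order all_algebra.
Set Implicit Arguments. Unset Strict Implicit. Unset Printing Implicit Defensive.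
Import GRing.Theory.

(* Messages: finType Msg; receivers: finType Rcv; receiver i demands f i and
   has side information X i. *)
Section IndexCoding.
Variables (Msg Rcv : finType) (f : Rcv -> Msg) (X : Rcv -> {set Msg}).

Local Open Scope ring_scope.
Definition ic_matrix (F : fieldType) (V : Rcv -> Msg -> F)
  : 'M[F]_(#|Rcv|, #|Msg|) :=
  \matrix_(i < #|Rcv|, j < #|Msg|)
     (V (enum_val i) (enum_val j) + ((enum_val j == f (enum_val i))%:R)%R).

Definition ic_admissible (F : finFieldType) (V : {ffun Rcv -> {ffun Msg -> F}}) :=
  [forall i, forall j, (V i j != 0%R) ==> (j \in X i)].

Local Close Scope ring_scope.
Definition minrank (F : finFieldType) : nat :=
  \big[minn/#|Rcv|]_(V : {ffun Rcv -> {ffun Msg -> F}} | ic_admissible V)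
     \rank (ic_matrix (fun i j => V i j)).

Definition Yset (i : Rcv) : {set Msg} := ~: (f i |: X i).

Definition in_J (S : {set Msg}) : bool :=
  [exists i, exists Y : {set Msg}, (Y \subset Yset i) && (S == f i |: Y)].

Definition gen_indep (H : {set Msg}) : bool :=
  [forall S : {set Msg}, ((S \subset H) && (S != set0)) ==> in_J S].

Definition alpha : nat := \max_(H : {set Msg} | gen_indep H) #|H|.

End IndexCoding.

Section SharedCache.
Variables (N K Lam t : nat) (c : 'I_K -> 'I_Lam) (d : 'I_K -> 'I_N).

(* subfile X^n_T, |T| = t *)
Definition sc_msg := {x : 'I_N * {set 'I_Lam} | #|x.2| == t}.

(* receiver (u, T) with cache c u not in T, |T| = t *)
Definition sc_rcv :=
  {y : 'I_K * {set 'I_Lam} | (#|y.2| == t) && (c y.1 \notin y.2)}.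

Lemma sc_rcv_card (r : sc_rcv) : #|(val r).2| == t.
Proof. by case/andP: (valP r). Qed.

Definition sc_demand (r : sc_rcv) : sc_msg :=
  @Sub _ _ sc_msg (d (val r).1, (val r).2) (sc_rcv_card r).

(* side information: everything stored in cache c u *)
Definition sc_side (r : sc_rcv) : {set sc_msg} :=
  [set m : sc_msg | c (val r).1 \in (val m).2].

Definition load (lam : 'I_Lam) : nat := #|[set u | c u == lam]|.

End SharedCache.

(* Let H be the set of subfiles X^{d_u}_T such that every cache in T comes after the
   cache of u (caches being sorted by nonincreasing load).  H is generalized independent:
   in any nonempty subset of H, the subfile whose user sits at the smallest cache is
   demanded by a receiver that caches none of the others.  Counting the users of each
   cache gives |H| = sum_i L_i C(Lam - i, t), hence alpha >= |H|.  Conversely alpha <= kappa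
   for every index coding problem, and the shared-cache delivery scheme is a linear code
   of rank at most |H|: for each (t+1)-set Q of caches and each j, it sends the sum of
   X^{d_u}_{Q \ c(u)} over the users u with c(u) in Q that are the j-th user of their
   cache; this transmission can be attributed to the j-th user of the smallest cache of
   Q, which exists because loads are nonincreasing, so its rows are indexed by H. *)

From mathcomp Require Import all_boot all_order all_algebra zify.
Set Implicit Arguments. Unset Strict Implicit. Unset Printing Implicit Defensive.
Import Order.TTheory GRing.Theory.

Lemma mxrank_le_card_rows (F : fieldType) m n (A : 'M[F]_(m, n))
    (T : finType) (H : {set T}) (W : T -> 'rV[F]_n) :
  (forall i, exists2 x, x \in H & row i A = W x) -> \rank A <= #|H|.
Proof.
move=> rowA.
pose B := (\matrix_(l < #|H|, j < n) W (enum_val l) 0 j)%R.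
apply: leq_trans (rank_leq_row B); apply: mxrankS; apply/row_subP => i.
have [x xH ->] := rowA i.
rewrite -(enum_rankK_in xH xH) (_ : W _ = row (enum_rank_in xH x) B) ?row_sub //.
by apply/rowP => j; rewrite !mxE.
Qed.

Section IndexCodingBounds.
Variables (Msg Rcv : finType) (f : Rcv -> Msg) (X : Rcv -> {set Msg}).
Local Open Scope ring_scope.

Lemma ic_admissible_out (F : finFieldType) (V : {ffun Rcv -> {ffun Msg -> F}}) i m :
  ic_admissible X V -> m \notin X i -> V i m = 0.
Proof.
move=> /forallP /(_ i) /forallP /(_ m) /implyP admV mX.
by apply/eqP; apply: contraNT mX => /admV.
Qed.

Hypothesis demand_notin_side : forall i, f i \notin X i.

Lemma in_J_receiver S :
  in_J f X S -> exists2 i, f i \in S & {in S, forall m, m \notin X i}.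
Proof.
case/existsP => i /existsP [Y /andP [/subsetP sYY /eqP ->]].
exists i; first exact: setU11.
move=> m; case/setU1P => [-> //|/sYY].
by rewrite in_setC in_setU1 negb_or => /andP [].
Qed.

Lemma gen_indep_le_rank (F : finFieldType) (V : {ffun Rcv -> {ffun Msg -> F}})
    (H : {set Msg}) :
  ic_admissible X V -> gen_indep f X H ->
  (#|H| <= \rank (ic_matrix f (fun i j => V i j)))%N.
Proof.
move=> admV indH; set A := ic_matrix _ _.
pose E := rowsub (fun l : 'I_#|H| => enum_rank (enum_val l)) A^T.
suff /eqP <- : row_free E.
  by rewrite -(mxrank_tr A) mxrankS ?rowsub_sub.
(* A vanishing combination of the columns indexed by a nonempty S of H is impossible:
   the receiver witnessing that S is in J sees exactly one of them, with entry 1. *)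
apply/inj_row_free => v vE0; apply/rowP => l0; rewrite mxE.
apply: contraTeq isT => v_l0.
pose S := [set enum_val l | l in [set l | v 0 l != 0]].
have /forallP /(_ S) := indH.
have -> /= : S \subset H by apply/subsetP => _ /imsetP [l _ ->]; exact: enum_valP.
have -> /= : S != set0 by apply/set0Pn; exists (enum_val l0); apply: imset_f; rewrite inE.
case/in_J_receiver => i /imsetP [l1]; rewrite inE => v_l1 fiE SX.
suff : (v *m E) 0 (enum_rank i) = v 0 l1.
  by rewrite vE0 mxE => /esym/eqP; rewrite (negbTE v_l1).
rewrite mxE (bigD1 l1) //= big1 => [|l ne_l]; rewrite !mxE !enum_rankK.
  by rewrite -fiE ic_admissible_out ?SX ?fiE ?imset_f ?inE // eqxx add0r mulr1 addr0.
have [-> | v_l] := eqVneq (v 0 l) 0; first by rewrite mul0r.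
have lS : enum_val l \in S by rewrite imset_f ?inE.
by rewrite ic_admissible_out ?SX // fiE (inj_eq enum_val_inj) (negbTE ne_l) addr0 mulr0.
Qed.

Lemma minrank_le_rank (F : finFieldType) (V : {ffun Rcv -> {ffun Msg -> F}}) :
  ic_admissible X V -> (minrank f X F <= \rank (ic_matrix f (fun i j => V i j)))%N.
Proof.
move=> admV; rewrite /minrank -leEnat -minEnat.
exact: (bigmin_le_cond _ (fun V : {ffun Rcv -> {ffun Msg -> F}} => \rank _) admV).
Qed.

Lemma alpha_le_minrank (F : finFieldType) : (alpha f X <= minrank f X F)%N.
Proof.
apply/bigmax_leqP => H indH; apply: (big_ind (fun r => #|H| <= r)%N) => [||V admV].
- have adm0 : ic_admissible X [ffun=> [ffun=> 0 : F]].
    by apply/forallP => i; apply/forallP => m; rewrite !ffunE eqxx.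
  exact: leq_trans (gen_indep_le_rank adm0 indH) (rank_leq_row _).
- by move=> x y Hx Hy; rewrite leq_min Hx Hy.
- exact: gen_indep_le_rank.
Qed.

Lemma alpha_minrank_eq (F : finFieldType) (H : {set Msg})
    (V : {ffun Rcv -> {ffun Msg -> F}}) :
  gen_indep f X H -> ic_admissible X V ->
  (\rank (ic_matrix f (fun i j => V i j)) <= #|H|)%N ->
  alpha f X = #|H| /\ minrank f X F = #|H|.
Proof.
move=> indH admV rankV.
have H_le_alpha : (#|H| <= alpha f X)%N by exact: leq_bigmax_cond.
have minrank_le_H := leq_trans (minrank_le_rank admV) rankV.
have alpha_le := alpha_le_minrank F.
split; apply/eqP; rewrite eqn_leq.
- by rewrite H_le_alpha (leq_trans alpha_le).
- by rewrite minrank_le_H (leq_trans H_le_alpha).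
Qed.

End IndexCodingBounds.

Lemma card_ord_gt n (i : 'I_n) : #|[set l : 'I_n | i < l]| = n - i.+1.
Proof.
rewrite -sum1_card (eq_bigl (fun l : 'I_n => i < l)) => [|l]; last by rewrite inE.
rewrite -(big_mkord (fun l => i < l) (fun=> 1)) big_mkcond /=.
rewrite (@big_cat_nat _ _ _ i.+1) //= big1_seq => [|l]; last first.
  by rewrite mem_index_iota ltnNge => /andP [_ /negbTE ->].
rewrite add0n (eq_big_nat _ _ (F2 := fun=> 1)) => [|l /andP [il _]]; last by rewrite il.
by rewrite sum_nat_const_nat muln1.
Qed.

Lemma card_pair_set (A B : finType) (P : A -> B -> bool) :
  #|[set p : A * B | P p.1 p.2]| = \sum_a #|[set b | P a b]|.
Proof.
rewrite -sum1_card (eq_bigl (fun p => P p.1 p.2)) => [|p]; last by rewrite inE.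
rewrite -(pair_big_dep xpredT P (fun _ _ => 1)) /=.
by apply: eq_bigr => a _; rewrite -sum1_card; apply: eq_bigl => b; rewrite inE.
Qed.

Section CacheUsers.
Variables (K Lam : nat) (c : 'I_K -> 'I_Lam).

Lemma sum_by_cache (G : 'I_Lam -> nat) : \sum_u G (c u) = \sum_l load c l * G l.
Proof.
rewrite (partition_big c xpredT) //=; apply: eq_bigr => l _.
rewrite (eq_bigr (fun=> G l)) => [|u /eqP -> //].
by rewrite sum_nat_const; congr (_ * _); apply: eq_card => u; rewrite inE.
Qed.

Definition cache_users (l : 'I_Lam) : seq 'I_K := enum [set u | c u == l].

Definition user_rank (u : 'I_K) : nat := index u (cache_users (c u)).

Lemma size_cache_users l : size (cache_users l) = load c l.
Proof. by rewrite -cardE. Qed.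

Lemma mem_cache_users u l : (u \in cache_users l) = (c u == l).
Proof. by rewrite mem_enum inE. Qed.

Lemma user_rank_lt u : user_rank u < load c (c u).
Proof. by rewrite -size_cache_users index_mem mem_cache_users. Qed.

Lemma user_rank_inj u1 u2 : c u1 = c u2 -> user_rank u1 = user_rank u2 -> u1 = u2.
Proof.
rewrite /user_rank => c12; rewrite c12.
by apply: (index_inj u1); rewrite mem_cache_users ?c12.
Qed.

Lemma user_rank_surj l j : j < load c l -> exists2 u, c u = l & user_rank u = j.
Proof.
rewrite -size_cache_users; case def_s: (cache_users l) => [//|u0 s] lt_j.
have /eqP cu : c (nth u0 (u0 :: s) j) == l by rewrite -mem_cache_users def_s mem_nth.
exists (nth u0 (u0 :: s) j) => //.
by rewrite /user_rank cu def_s index_uniq // -def_s enum_uniq.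
Qed.

End CacheUsers.

Section SharedCacheIndependentSet.
Variables (N K Lam t : nat) (c : 'I_K -> 'I_Lam) (d : 'I_K -> 'I_N).
Hypothesis d_inj : injective d.

Local Notation Msg := (sc_msg N Lam t).
Local Notation Rcv := (sc_rcv t c).

Definition caches_after (u : 'I_K) : {set 'I_Lam} := [set l : 'I_Lam | c u < l].

Definition sc_indep_set : {set Msg} :=
  [set m : Msg | [exists u, (d u == (val m).1) && ((val m).2 \subset caches_after u)]].

Lemma cache_notin_after u : c u \notin caches_after u.
Proof. by rewrite inE ltnn. Qed.

Lemma card_sc_indep_set :
  #|sc_indep_set| = \sum_(i < Lam | i < Lam - t) load c i * 'C(Lam - i.+1, t).
Proof.
pose P := [set p : 'I_K * {set 'I_Lam} | (p.2 \subset caches_after p.1) && (#|p.2| == t)].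
have val_image : val @: sc_indep_set = (fun p => (d p.1, p.2)) @: P.
  apply/setP => x; apply/imsetP/imsetP => [[m] | [[u T]]].
    rewrite inE => /existsP [u /andP [/eqP du sTu]] ->.
    by exists (u, (val m).2); rewrite ?inE /= ?sTu ?(valP m) // du -surjective_pairing.
  rewrite inE /= => /andP [sTu cardT] ->.
  exists (Sub (d u, T) cardT : Msg); last by rewrite SubK.
  by rewrite inE; apply/existsP; exists u; rewrite SubK eqxx.
rewrite -(card_imset _ val_inj) val_image card_imset; last first.
  by move=> [u1 T1] [u2 T2] [/d_inj -> ->].
rewrite (card_pair_set (fun u (T : {set 'I_Lam}) =>
  (T \subset caches_after u) && (#|T| == t))).
under eq_bigr do rewrite cards_draws card_ord_gt.
rewrite (sum_by_cache c (fun l => 'C(Lam - l.+1, t))) [RHS]big_mkcond.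
apply: eq_bigr => l _; case: ltnP => // le_l.
by rewrite bin_small ?muln0 //; have := ltn_ord l; lia.
Qed.

Definition requester (n : 'I_N) : option 'I_K := [pick u | d u == n].

Lemma requester_d u : requester (d u) = Some u.
Proof.
by rewrite /requester; case: pickP => [u' /eqP /d_inj -> // | /(_ u)]; rewrite eqxx.
Qed.

Definition msg_cache (m : Msg) : nat := if requester (val m).1 is Some u then c u else 0.

Lemma msg_cacheE m u : d u = (val m).1 -> msg_cache m = c u.
Proof. by rewrite /msg_cache => <-; rewrite requester_d. Qed.

Lemma sc_demand_val (r : Rcv) : val (sc_demand d r) = (d (val r).1, (val r).2).
Proof. by rewrite SubK. Qed.

Lemma sc_demand_notin_side (r : Rcv) : sc_demand d r \notin @sc_side N K Lam t c r.
Proof. by rewrite inE sc_demand_val; case/andP: (valP r). Qed.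

Lemma receiver_demanding (m : Msg) u :
  d u = (val m).1 -> c u \notin (val m).2 ->
  exists2 r : Rcv, (val r).1 = u & sc_demand d r = m.
Proof.
move=> du cu.
have rP : (#|(u, (val m).2).2| == t) && (c (u, (val m).2).1 \notin (u, (val m).2).2).
  by rewrite /= (valP m) cu.
exists (Sub (u, (val m).2) rP); first by rewrite SubK.
by apply: val_inj; rewrite sc_demand_val SubK /= du -surjective_pairing.
Qed.

Lemma gen_indep_sc_indep_set :
  gen_indep (@sc_demand N K Lam t c d) (@sc_side N K Lam t c) sc_indep_set.
Proof.
apply/forallP => S; apply/implyP => /andP [/subsetP sSH /set0Pn [m0 m0S]].
have [m mS m_min] := arg_minnP msg_cache m0S.
have /sSH := mS; rewrite inE => /existsP [u /andP [/eqP du sTu]].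
have cu : c u \notin (val m).2.
  by apply: contra (cache_notin_after u); apply: (subsetP sTu).
have [r ru rm] := receiver_demanding du cu.
apply/existsP; exists r; apply/existsP; exists (S :\ m); rewrite rm setD1K // eqxx andbT.
apply/subsetP => m'; rewrite in_setD1 => /andP [ne_m' m'S].
rewrite in_setC in_setU1 rm (negbTE ne_m') inE ru /=.
have /sSH := m'S; rewrite inE => /existsP [u' /andP [/eqP du' sTu']].
have := m_min m' m'S; rewrite (msg_cacheE du) (msg_cacheE du') => le_cu.
by apply/negP => /(subsetP sTu'); rewrite inE ltnNge le_cu.
Qed.

End SharedCacheIndependentSet.

Section SharedCacheCode.
Variables (F : finFieldType) (N K Lam t : nat).
Variables (c : 'I_K -> 'I_Lam) (d : 'I_K -> 'I_N).
Hypothesis d_inj : injective d.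

Local Notation Msg := (sc_msg N Lam t).
Local Notation Rcv := (sc_rcv t c).
Local Notation demand := (@sc_demand N K Lam t c d).
Local Notation side := (@sc_side N K Lam t c).

Definition receiver_caches (r : Rcv) : {set 'I_Lam} := c (val r).1 |: (val r).2.

Definition coded_terms (Q : {set 'I_Lam}) (j : nat) : {set Msg} :=
  [set m : Msg | [exists u,
     [&& c u \in Q, user_rank c u == j & val m == (d u, Q :\ c u)]]].

Definition coded_row (Q : {set 'I_Lam}) (j : nat) : 'rV[F]_#|{: Msg}| :=
  (\row_k (enum_val k \in coded_terms Q j)%:R)%R.

Definition sc_code : {ffun Rcv -> {ffun Msg -> F}} :=
  [ffun r => [ffun m =>
     ((m \in coded_terms (receiver_caches r) (user_rank c (val r).1))
      && (m != demand r))%:R%R]].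

Lemma cache_notin_receiver (r : Rcv) : c (val r).1 \notin (val r).2.
Proof. by case/andP: (valP r). Qed.

Lemma card_receiver_caches r : #|receiver_caches r| = t.+1.
Proof. by rewrite cardsU1 cache_notin_receiver (eqP (sc_rcv_card r)). Qed.

Lemma demand_in_coded_terms r :
  demand r \in coded_terms (receiver_caches r) (user_rank c (val r).1).
Proof.
rewrite inE; apply/existsP; exists (val r).1.
by rewrite setU11 sc_demand_val /receiver_caches setU1K ?cache_notin_receiver ?eqxx.
Qed.

Lemma sc_code_admissible : ic_admissible side sc_code.
Proof.
apply/forallP => r; apply/forallP => m; apply/implyP; rewrite !ffunE.
case: andP => [[] | _]; last by rewrite eqxx.
rewrite inE => /existsP [u /and3P [uQ /eqP rank_u /eqP mE]] ne_m _.
rewrite inE mE in_setD1 setU11 andbT; apply: contra ne_m => /eqP cu.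
have ru : u = (val r).1 := user_rank_inj (esym cu) rank_u.
apply/eqP/val_inj.
by rewrite mE sc_demand_val ru /receiver_caches setU1K ?cache_notin_receiver.
Qed.

Lemma row_sc_code k :
  row k (ic_matrix demand (fun i j => sc_code i j))
  = coded_row (receiver_caches (enum_val k)) (user_rank c (val (enum_val k)).1).
Proof.
apply/rowP => l; rewrite !mxE !ffunE.
have [-> | ne_l] := eqVneq (enum_val l) (demand (enum_val k)).
  by rewrite demand_in_coded_terms add0r.
by rewrite andbT addr0.
Qed.

Definition msg_row (m : Msg) : 'rV[F]_#|{: Msg}| :=
  if requester d (val m).1 is Some u then coded_row (c u |: (val m).2) (user_rank c u)
  else 0%R.

Hypothesis load_nonincreasing : forall i j : 'I_Lam, i <= j -> load c j <= load c i.

Lemma coded_row_indep_set (r : Rcv) :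
  exists2 m, m \in @sc_indep_set N K Lam t c d &
    coded_row (receiver_caches r) (user_rank c (val r).1) = msg_row m.
Proof.
set Q := receiver_caches r; set j := user_rank c (val r).1.
have [mu /= muQ mu_min] := @arg_minnP _ (c (val r).1) (fun l => l \in Q) val (setU11 _ _).
have [u cu rank_u] : exists2 u, c u = mu & user_rank c u = j.
  apply: user_rank_surj; apply: leq_trans (user_rank_lt c _) _.
  exact/load_nonincreasing/mu_min/setU11.
have card_m : #|(d u, Q :\ mu).2| == t.
  by move: (card_receiver_caches r); rewrite -/Q (cardsD1 mu) muQ add1n => -[->].
exists (Sub (d u, Q :\ mu) card_m).
  rewrite inE; apply/existsP; exists u; rewrite SubK eqxx /=.
  apply/subsetP => l; rewrite in_setD1 => /andP [ne_l lQ]; rewrite inE cu.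
  by rewrite ltn_neqAle val_eqE eq_sym ne_l mu_min.
by rewrite /msg_row SubK requester_d // cu setD1K // rank_u.
Qed.

Lemma rank_sc_code :
  \rank (ic_matrix demand (fun i j => sc_code i j)) <= #|@sc_indep_set N K Lam t c d|.
Proof.
apply: (mxrank_le_card_rows (W := msg_row)) => k.
by rewrite row_sc_code; apply: coded_row_indep_set.
Qed.

End SharedCacheCode.

Theorem theorem1 (F : finFieldType) (N K Lam t : nat)
  (c : 'I_K -> 'I_Lam) (d : 'I_K -> 'I_N) :
  Lam <= K -> K <= N -> 1 <= t <= Lam ->
  (forall i j : 'I_Lam, i <= j -> load c j <= load c i) ->
  injective d ->
  alpha (@sc_demand N K Lam t c d) (@sc_side N K Lam t c)
    = \sum_(i < Lam | i < Lam - t) load c i * 'C(Lam - i.+1, t) /\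
  minrank (@sc_demand N K Lam t c d) (@sc_side N K Lam t c) F
    = \sum_(i < Lam | i < Lam - t) load c i * 'C(Lam - i.+1, t).
Proof.
move=> _ _ _ load_nonincreasing d_inj.
rewrite -(card_sc_indep_set t c d_inj).
apply: alpha_minrank_eq.
- exact: sc_demand_notin_side.
- exact: gen_indep_sc_indep_set.
- exact: sc_code_admissible.
- exact: rank_sc_code.
Qed.
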